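(* Let $\lambda=(\lambda_1,\ldots,\lambda_\ell)$ be a partition with $\ell$ positive parts, and let $n\geq\ell$. If there exists $p\in\{1,\ldots,\ell-2\}$ such that $\lambda_p>\lambda_{p+1}\geq\lambda_{p+2}\geq 2$, then the poset $\mathcal B_\lambda^n$ is not a lattice.
   Context: For $N\geq 1$ and a partition $\nu$ with at most $N$ positive parts, $\mathcal B_\nu^N$ is the set of semistandard Young tableaux of shape $\nu$ (rows weakly increasing, columns strictly increasing) with entries in $\{1,\ldots,N+1\}$, partially ordered by the reflexive transitive closure of $T<F_i(T)$ for $i\in\{1,\ldots,N\}$ with $F_i(T)\neq 0$. Here $F_i$ is the type A crystal lowering operator: in the reading word of $T$ (rows read from bottom to top, each row left to right) keep only letters $i$ and $i+1$, replace each $i$ by '')'' and each $i+1$ by ''('', and match parentheses in the usual way; if there is no unmatched '')'', $F_i(T)=0$; otherwise $F_i(T)$ is obtained by changing the entry $i$ corresponding to the rightmost unmatched '')'' into $i+1$. *)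

From mathcomp Require Import all_boot.
From Stdlib Require Import Relation_Operators.
Set Implicit Arguments. Unset Strict Implicit. Unset Printing Implicit Defensive.

(* A tableau is a list of rows, row 1 (top) first; entries are nats. *)
Definition tableau := seq (seq nat).

(* entry in row r, column c (0-indexed) *)
Definition entry (T : tableau) (r c : nat) : nat := nth 0 (nth [::] T r) c.

Definition is_ssyt (N : nat) (nu : seq nat) (T : tableau) : Prop :=
  [/\ map size T = nu,
      all (fun r => sorted leq r) T,
      all (fun r => all (fun a => (1 <= a) && (a <= N.+1)) r) T &
      forall r c, r.+1 < size T -> c < size (nth [::] T r.+1) ->
        entry T r c < entry T r.+1 c].

Definition reading_word (T : tableau) : seq nat := flatten (rev T).

(* Positions (in the reading word) of the unmatched ")" = letters i,
   where each i.+1 is "(" ; [op] counts currently open "(". *)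
Fixpoint unmatched (i op pos : nat) (w : seq nat) : seq nat :=
  match w with
  | [::] => [::]
  | a :: w' =>
      if a == i.+1 then unmatched i op.+1 pos.+1 w'
      else if a == i then
        (if 0 < op then unmatched i op.-1 pos.+1 w'
         else pos :: unmatched i op pos.+1 w')
      else unmatched i op pos.+1 w'
  end.

(* Crystal lowering operator F_i; None stands for 0. *)
Definition crystalF (i : nat) (T : tableau) : option tableau :=
  let w := reading_word T in
  match rev (unmatched i 0 0 w) with
  | [::] => None
  | k :: _ => Some (rev (reshape (map size (rev T)) (set_nth 0 w k i.+1)))
  end.

Definition fstep (N : nat) (T U : tableau) : Prop :=
  exists i, 1 <= i <= N /\ crystalF i T = Some U.

Definition Ble (N : nat) : tableau -> tableau -> Prop :=
  clos_refl_trans tableau (fstep N).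

Definition is_join (N : nat) (nu : seq nat) (x y z : tableau) : Prop :=
  [/\ is_ssyt N nu z, Ble N x z, Ble N y z &
      forall u, is_ssyt N nu u -> Ble N x u -> Ble N y u -> Ble N z u].

Definition is_meet (N : nat) (nu : seq nat) (x y z : tableau) : Prop :=
  [/\ is_ssyt N nu z, Ble N z x, Ble N z y &
      forall u, is_ssyt N nu u -> Ble N u x -> Ble N u y -> Ble N u z].

Definition B_is_lattice (N : nat) (nu : seq nat) : Prop :=
  forall x y, is_ssyt N nu x -> is_ssyt N nu y ->
    (exists z, is_join N nu x y z) /\ (exists z, is_meet N nu x y z).

From mathcomp Require Import all_boot zify.
From Stdlib Require Import Relation_Operators Operators_Properties.
Set Implicit Arguments. Unset Strict Implicit. Unset Printing Implicit Defensive.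

(* Index rows from 0 and write p = q + 1, so that rows q, q+1, q+2 have lengths
   a > b >= c >= 2.  Fill each row r above them with r+1 and each row r below
   them with r+2, and fill rows q, q+1, q+2 with q+1, q+2, q+3 except for five
   cells: the last two of row q, the last of row q+1 and the last two of row
   q+2; write (e1,e2 | e3 | e4,e5) for their entries.
   Every F_i raises one letter of the reading word by one, so T <= U forces the
   reading word of T to lie entrywise below that of U, with a strictly smaller
   sum unless T = U.  Now X = (q+1,q+3 | q+2 | q+3,q+4) and
   Y = (q+2,q+2 | q+3 | q+3,q+4) lie below M = (q+2,q+3 | q+3 | q+3,q+4), whose
   reading word is the entrywise maximum of theirs, so a join of X and Y can
   only be M.  Both also lie below Z = (q+2,q+3 | q+3 | q+4,q+4), whose sum
   exceeds that of M by one, so M <= Z would be a single step F_i M = Z.  As M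
   and Z differ only in the cell e4, which holds q+3 in M, this forces
   i = q+3; but F_(q+3) M raises the cell e2 instead. *)

Lemma set_nth_catr (T : Type) (x0 : T) s1 s2 k y :
  set_nth x0 (s1 ++ s2) (size s1 + k) y = s1 ++ set_nth x0 s2 k y.
Proof. by elim: s1 => //= a s1 ->. Qed.

Lemma set_nth_catl (T : Type) (x0 : T) s1 s2 k y : k < size s1 ->
  set_nth x0 (s1 ++ s2) k y = set_nth x0 s1 k y ++ s2.
Proof. by elim: s1 k => [|a s1 IH] [|k] //= /IH ->. Qed.

Lemma set_nth_nseq_cat j k (x : nat) s m y : m = k + j ->
  set_nth 0 (nseq k x ++ s) m y = nseq k x ++ set_nth 0 s j y.
Proof. by move=> ->; elim: k => //= k ->. Qed.

Lemma nth_nseq_cat (x : nat) k s c :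
  nth 0 (nseq k x ++ s) c = if c < k then x else nth 0 s (c - k).
Proof. by rewrite nth_cat size_nseq nth_nseq; case: ltnP. Qed.

Lemma sorted_nseq_cat x k s : path leq x s -> sorted leq (nseq k x ++ s).
Proof.
move=> xs; case: k => [|k]; first by case: s xs => //= y s /andP [].
by elim: k => //= k ->; rewrite leqnn.
Qed.

Lemma mkseqD (T : Type) (f : nat -> T) m n :
  mkseq f (m + n) = mkseq f m ++ mkseq (fun i => f (m + i)) n.
Proof.
rewrite /mkseq iotaD map_cat add0n; congr (_ ++ _).
by rewrite -{1}(addn0 m) iotaDl -map_comp.
Qed.

Lemma all2_leq_refl (s : seq nat) : all2 leq s s.
Proof. by elim: s => //= a s ->; rewrite leqnn. Qed.

Lemma all2_leq_trans (s t u : seq nat) : all2 leq s t -> all2 leq t u -> all2 leq s u.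
Proof.
elim: s t u => [|a s IH] [|b t] [|c u] //= /andP [ab st] /andP [bc tu].
by rewrite (leq_trans ab bc) (IH _ _ st tu).
Qed.

Lemma all2_leq_sumn (s t : seq nat) : all2 leq s t -> sumn s <= sumn t.
Proof. by elim: s t => [|a s IH] [|b t] //= /andP [ab /IH]; apply: leq_add. Qed.

Lemma all2_leq_set_nth (s : seq nat) k : k < size s ->
  all2 leq s (set_nth 0 s k (nth 0 s k).+1).
Proof.
elim: s k => [|a s IH] [|k] //=; first by rewrite leqnSn all2_leq_refl.
by rewrite leqnn => /IH.
Qed.

Definition maxw (s t : seq nat) := [seq maxn x.1 x.2 | x <- zip s t].

Lemma maxw_cons x y (s t : seq nat) : maxw (x :: s) (y :: t) = maxn x y :: maxw s t.
Proof. by []. Qed.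

Lemma maxw_cat (s1 s2 t1 t2 : seq nat) : size s1 = size t1 ->
  maxw (s1 ++ s2) (t1 ++ t2) = maxw s1 t1 ++ maxw s2 t2.
Proof. by move=> st; rewrite /maxw zip_cat // map_cat. Qed.

Lemma maxw_id (s : seq nat) : maxw s s = s.
Proof. by rewrite /maxw; elim: s => //= a s ->; rewrite maxnn. Qed.

Lemma all2_leq_maxw (s t u : seq nat) :
  all2 leq s u -> all2 leq t u -> all2 leq (maxw s t) u.
Proof.
elim: s t u => [|a s IH] [|b t] [|c u] //= /andP [ac su] /andP [bc tu].
by rewrite geq_max ac bc IH.
Qed.

(** * Bracket matching *)

Definition neutral (i : nat) (w : seq nat) := all (fun a => (a != i) && (a != i.+1)) w.

Lemma unmatched_shift i op pos d w :
  unmatched i op (d + pos) w = map (addn d) (unmatched i op pos w).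
Proof.
elim: w op pos => [|a w IH] op pos //=.
by rewrite -addnS; repeat case: ifP => _; rewrite /= IH.
Qed.

Lemma mem_unmatched i op pos w k : k \in unmatched i op pos w ->
  [/\ pos <= k, k < pos + size w & nth 0 w (k - pos) = i].
Proof.
elim: w op pos => [|a w IH] op pos //=.
have shift op' : k \in unmatched i op' pos.+1 w ->
    [/\ pos <= k, k < pos + (size w).+1 & nth 0 (a :: w) (k - pos) = i].
  by case/IH => h1 h2 h3; split; [lia | lia | rewrite -subnSK].
case: ifP => _; first exact: shift.
case: ifP => /eqP ai; last exact: shift.
case: ifP => _; first exact: shift.
by rewrite inE => /predU1P [->|]; [rewrite subnn addnS ltnS leq_addr | exact: shift].
Qed.

Lemma unmatched_neutral_cat i op pos u w : neutral i u ->
  unmatched i op pos (u ++ w) = unmatched i op (pos + size u) w.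
Proof.
elim: u pos => [|a u IH] pos /=; first by rewrite addn0.
by case/andP => /andP [/negbTE -> /negbTE ->] /IH ->; rewrite addnS.
Qed.

Lemma unmatched_cat_neutral i op pos w v : neutral i v ->
  unmatched i op pos (w ++ v) = unmatched i op pos w.
Proof.
move=> nv; elim: w op pos => [|a w IH] op pos /=.
  by rewrite -[v]cats0 unmatched_neutral_cat.
by repeat case: ifP => _; rewrite IH.
Qed.

Lemma unmatched_nseq_neutral i op pos k x w : x != i -> x != i.+1 ->
  unmatched i op pos (nseq k x ++ w) = unmatched i op (pos + k) w.
Proof.
move=> xi xi1; rewrite unmatched_neutral_cat ?size_nseq //.
by rewrite /neutral all_nseq xi xi1 orbT.
Qed.

Lemma unmatched_nseq_open i op pos k w :
  unmatched i op pos (nseq k i.+1 ++ w) = unmatched i (op + k) (pos + k) w.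
Proof.
elim: k op pos => [|k IH] op pos /=; first by rewrite !addn0.
by rewrite eqxx IH !addSnnS.
Qed.

Lemma unmatched_nseq_close i op pos k w :
  unmatched i op pos (nseq k i ++ w) =
  iota (pos + op) (k - op) ++ unmatched i (op - k) (pos + k) w.
Proof.
elim: k op pos => [|k IH] op pos /=; first by rewrite subn0 addn0.
rewrite eqxx ltn_eqF //.
case: op => [|op] /=; rewrite IH.
  by congr (_ :: iota _ _ ++ unmatched _ _ _ _); lia.
by congr (iota _ _ ++ unmatched _ _ _ _); lia.
Qed.

(** * Crystal operators and the order *)

Lemma reading_word_crystalF i T U : crystalF i T = Some U ->
  exists k, [/\ k < size (reading_word T), nth 0 (reading_word T) k = i &
                reading_word U = set_nth 0 (reading_word T) k i.+1].
Proof.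
rewrite /crystalF.
case E: (rev (unmatched i 0 0 (reading_word T))) => [|k l] //= [<-].
have: k \in unmatched i 0 0 (reading_word T) by rewrite -mem_rev E mem_head.
case/mem_unmatched => _; rewrite add0n subn0 => hk hki.
exists k; split => //.
rewrite /reading_word revK reshapeKr // size_set_nth -size_flatten.
by rewrite (maxn_idPr hk).
Qed.

Lemma crystalF_frame i T U u w w' v l j :
  reading_word T = u ++ w ++ v -> reading_word U = u ++ w' ++ v ->
  shape T = shape U -> neutral i u -> neutral i v ->
  unmatched i 0 0 w = rcons l j -> set_nth 0 w j i.+1 = w' ->
  crystalF i T = Some U.
Proof.
move=> rwT rwU shTU nu nv hw hw'.
have hj : j < size w.
  by have /mem_unmatched[] : j \in unmatched i 0 0 w by rewrite hw mem_rcons mem_head.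
rewrite /crystalF rwT unmatched_neutral_cat // unmatched_cat_neutral //.
rewrite add0n -[size u]addn0 unmatched_shift hw map_rcons rev_rcons /=.
rewrite set_nth_catr set_nth_catl // hw' -rwU /reading_word.
by rewrite map_rev -/(shape T) shTU -map_rev flattenK revK.
Qed.

Lemma crystalF_reading_word i T U : crystalF i T = Some U ->
  all2 leq (reading_word T) (reading_word U) /\
  sumn (reading_word U) = (sumn (reading_word T)).+1.
Proof.
case/reading_word_crystalF => k [hk <- ->]; split; first exact: all2_leq_set_nth.
by rewrite sumn_set_nth0 addnS -addSn addnK.
Qed.

Lemma crystalF_changed i T U k : crystalF i T = Some U ->
  nth 0 (reading_word T) k != nth 0 (reading_word U) k ->
  nth 0 (reading_word T) k = i.
Proof.
case/reading_word_crystalF => k0 [_ hk0 ->]; rewrite nth_set_nth /=.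
by case: (k =P k0) => [-> //|_]; rewrite eqxx.
Qed.

Lemma Ble_crystalF N i T U : 0 < i <= N -> crystalF i T = Some U -> Ble N T U.
Proof. by move=> hi hTU; apply: rt_step; exists i. Qed.

Lemma Ble_trans N T U V : Ble N T U -> Ble N U V -> Ble N T V.
Proof. exact: rt_trans. Qed.

Lemma Ble_reading_word N T U : Ble N T U ->
  all2 leq (reading_word T) (reading_word U) /\
  (T = U \/ sumn (reading_word T) < sumn (reading_word U)).
Proof.
elim=> [x y [i [_ /crystalF_reading_word [le ->]]] | x | x y z _ [le1 lt1] _ [le2 lt2]].
- by split; last right.
- by split; [exact: all2_leq_refl | left].
split; first exact: all2_leq_trans le1 le2.
case: lt1 => [->|lt1] //; case: lt2 => [<-|lt2]; right => //.
exact: ltn_trans lt1 lt2.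
Qed.

Lemma Ble_sumn_eq N T U : Ble N T U ->
  sumn (reading_word T) = sumn (reading_word U) -> T = U.
Proof. by case/Ble_reading_word => _ [//|lt eq]; rewrite eq ltnn in lt. Qed.

Lemma Ble_cover N T U : Ble N T U ->
  sumn (reading_word U) = (sumn (reading_word T)).+1 -> fstep N T U.
Proof.
case/clos_rt_rt1n_iff => [|V {}U TV VU] sumTU; first by move: sumTU; lia.
have [i [_ /crystalF_reading_word [_ sumTV]]] := TV.
by rewrite -(Ble_sumn_eq (clos_rt1n_rt _ _ _ _ VU)) // sumTV.
Qed.

Lemma Ble_maxw_eq N x y j m : Ble N x j -> Ble N y j -> Ble N j m ->
  reading_word m = maxw (reading_word x) (reading_word y) -> j = m.
Proof.
move=> /Ble_reading_word [xj _] /Ble_reading_word [yj _] jm rwm.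
have [le_jm _] := Ble_reading_word jm.
apply: Ble_sumn_eq jm _; apply/eqP; rewrite eqn_leq.
by rewrite !all2_leq_sumn // rwm all2_leq_maxw.
Qed.

Definition col_strict (s t : seq nat) :=
  forall c, c < size t -> nth 0 s c < nth 0 t c.

Lemma col_strict_sep m s t : size t <= size s ->
  all (fun x => x <= m) s -> all (fun x => m < x) t -> col_strict s t.
Proof.
move=> st /allP sm /allP mt c ct.
exact: leq_ltn_trans (sm _ (mem_nth 0 (leq_trans ct st))) (mt _ (mem_nth 0 ct)).
Qed.

Lemma is_ssyt_mkseq N nu (row : nat -> seq nat) :
  (forall r, r < size nu -> size (row r) = nth 0 nu r) ->
  (forall r, r < size nu -> sorted leq (row r)) ->
  (forall r, r < size nu -> all (fun a => (1 <= a) && (a <= N.+1)) (row r)) ->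
  (forall r, r.+1 < size nu -> col_strict (row r) (row r.+1)) ->
  is_ssyt N nu (mkseq row (size nu)).
Proof.
move=> hsize hsort hval hcol; split.
- apply: (@eq_from_nth _ 0) => [|r]; rewrite size_map size_mkseq // => hr.
  by rewrite (nth_map [::]) ?size_mkseq // nth_mkseq // hsize.
- by apply/allP => ? /mapP [r]; rewrite mem_iota => /andP [_ /hsort ?] ->.
- by apply/allP => ? /mapP [r]; rewrite mem_iota => /andP [_ /hval ?] ->.
- move=> r c; rewrite size_mkseq /entry => hr.
  by rewrite !nth_mkseq ?(ltnW hr) //; apply: hcol.
Qed.

(** * The window tableaux *)

Section Window.

Variables (lam : seq nat) (q : nat).

Local Notation a := (nth 0 lam q).
Local Notation b := (nth 0 lam q.+1).
Local Notation c := (nth 0 lam q.+2).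

Definition window_row (e1 e2 e3 e4 e5 r : nat) : seq nat :=
  if r < q then nseq (nth 0 lam r) r.+1
  else if r == q then nseq (a - 2) q.+1 ++ [:: e1; e2]
  else if r == q.+1 then nseq (b - 1) q.+2 ++ [:: e3]
  else if r == q.+2 then nseq (c - 2) q.+3 ++ [:: e4; e5]
  else nseq (nth 0 lam r) r.+2.

Definition window e1 e2 e3 e4 e5 : tableau :=
  mkseq (window_row e1 e2 e3 e4 e5) (size lam).

Definition window_above : seq nat :=
  flatten (rev (mkseq (fun r => nseq (nth 0 lam r) r.+1) q)).

Definition window_below : seq nat :=
  flatten (rev (mkseq (fun r => nseq (nth 0 lam (q.+3 + r)) (q.+3 + r).+2)
                      (size lam - q.+3))).

Definition window_mid e1 e2 e3 e4 e5 : seq nat :=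
  nseq (c - 2) q.+3 ++ e4 :: e5 :: nseq (b - 1) q.+2 ++ e3 :: nseq (a - 2) q.+1 ++ [:: e1; e2].

Section Rows.

Variables e1 e2 e3 e4 e5 : nat.
Local Notation row := (window_row e1 e2 e3 e4 e5).

Lemma window_row_above r : r < q -> row r = nseq (nth 0 lam r) r.+1.
Proof. by rewrite /window_row => ->. Qed.

Lemma window_row_q : row q = nseq (a - 2) q.+1 ++ [:: e1; e2].
Proof. by rewrite /window_row ltnn eqxx. Qed.

Lemma window_row_q1 : row q.+1 = nseq (b - 1) q.+2 ++ [:: e3].
Proof. by rewrite /window_row eqxx /= !ifF //; lia. Qed.

Lemma window_row_q2 : row q.+2 = nseq (c - 2) q.+3 ++ [:: e4; e5].
Proof. by rewrite /window_row eqxx /= !ifF //; lia. Qed.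

Lemma window_row_below r : q.+2 < r -> row r = nseq (nth 0 lam r) r.+2.
Proof. by move=> hr; rewrite /window_row !ifF //; lia. Qed.

End Rows.

Lemma shape_window e1 e2 e3 e4 e5 f1 f2 f3 f4 f5 :
  shape (window e1 e2 e3 e4 e5) = shape (window f1 f2 f3 f4 f5).
Proof.
rewrite /shape /window /mkseq -!map_comp; apply: eq_map => r /=.
by rewrite /window_row; repeat case: ifP => _; rewrite ?size_cat.
Qed.

Lemma neutral_window_above i : q < i -> neutral i window_above.
Proof.
move=> qi; apply/allP => x /flattenP [s]; rewrite mem_rev => /mapP [r].
by rewrite mem_iota => rq -> /nseqP [-> _]; lia.
Qed.

Lemma neutral_window_below i : i <= q.+3 -> neutral i window_below.
Proof.
move=> iq; apply/allP => x /flattenP [s]; rewrite mem_rev => /mapP [r _ ->].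
by move=> /nseqP [-> _]; lia.
Qed.

Hypothesis hq : q.+3 <= size lam.

Lemma reading_word_window e1 e2 e3 e4 e5 :
  reading_word (window e1 e2 e3 e4 e5) =
  window_below ++ window_mid e1 e2 e3 e4 e5 ++ window_above.
Proof.
rewrite /reading_word /window.
have -> : size lam = q + (3 + (size lam - q.+3)) by rewrite addnA addn3 subnKC.
rewrite !mkseqD !rev_cat !flatten_cat -catA; congr (_ ++ _ ++ _).
- rewrite /window_below /mkseq; congr (flatten (rev _)); apply: eq_map => r.
  by rewrite window_row_below addnA addn3 //; lia.
- by rewrite /= addn0 addn1 addn2 window_row_q window_row_q1 window_row_q2 /= !cats0 -!catA.
- rewrite /window_above /mkseq; congr (flatten (rev _)); apply/eq_in_map => r.
  by rewrite mem_iota => /andP [_ /window_row_above].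
Qed.

Lemma crystalF_window i e1 e2 e3 e4 e5 f1 f2 f3 f4 f5 l j : q < i <= q.+3 ->
  unmatched i 0 0 (window_mid e1 e2 e3 e4 e5) = rcons l j ->
  set_nth 0 (window_mid e1 e2 e3 e4 e5) j i.+1 = window_mid f1 f2 f3 f4 f5 ->
  crystalF i (window e1 e2 e3 e4 e5) = Some (window f1 f2 f3 f4 f5).
Proof.
case/andP => qi iq; apply: crystalF_frame (reading_word_window _ _ _ _ _)
  (reading_word_window _ _ _ _ _) (shape_window _ _ _ _ _ _ _ _ _ _)
  (neutral_window_below iq) (neutral_window_above qi).
Qed.

Hypotheses (lam_sorted : sorted geq lam) (hab : b < a) (hbc : c <= b) (hc : 2 <= c).

Lemma col_strict_window_q e1 e2 e3 : e1 < e3 -> q.+1 < e3 ->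
  col_strict (nseq (a - 2) q.+1 ++ [:: e1; e2]) (nseq (b - 1) q.+2 ++ [:: e3]).
Proof.
move=> h13 h3 k; rewrite size_cat size_nseq addn1 => hk; rewrite !nth_nseq_cat.
have -> : k - (b - 1) = 0 by lia.
case: (ltnP k (a - 2)) => ka; case: (ltnP k (b - 1)) => kb //=; try lia.
by have -> : k - (a - 2) = 0 by lia.
Qed.

Lemma col_strict_window_q1 e3 e4 e5 : q.+3 <= e4 -> e3 < e5 -> q.+2 < e5 ->
  col_strict (nseq (b - 1) q.+2 ++ [:: e3]) (nseq (c - 2) q.+3 ++ [:: e4; e5]).
Proof.
move=> h4 h35 h5 k; rewrite size_cat size_nseq /= => hk; rewrite !nth_nseq_cat.
case: (ltnP k (c - 2)) => kc; case: (ltnP k (b - 1)) => kb //=; try lia.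
all: case E: (k - (c - 2)) => [|[|m]] /=; try lia.
by have -> : k - (b - 1) = 0 by lia.
Qed.

Ltac bound_entries := apply/allP => x; rewrite ?mem_cat mem_nseq ?inE; lia.

Section Cells.

Variables e1 e2 e3 e4 e5 : nat.
Hypotheses (h1 : q < e1) (h12 : e1 <= e2) (h2 : e2 <= q.+4) (h13 : e1 < e3) (h3 : q.+1 < e3).
Hypotheses (h4 : q.+2 < e4) (h45 : e4 <= e5) (h5 : e5 <= q.+4) (h35 : e3 < e5).
Local Notation row := (window_row e1 e2 e3 e4 e5).

Lemma size_window_row r : size (row r) = nth 0 lam r.
Proof.
have [hrq|[->|[->|[->|hrq]]]] : r < q \/ r = q \/ r = q.+1 \/ r = q.+2 \/ q.+2 < r by lia.
- by rewrite window_row_above // size_nseq.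
- by rewrite window_row_q size_cat size_nseq /=; lia.
- by rewrite window_row_q1 size_cat size_nseq /=; lia.
- by rewrite window_row_q2 size_cat size_nseq /=; lia.
- by rewrite window_row_below // size_nseq.
Qed.

Lemma sorted_window_row r : sorted leq (row r).
Proof.
have [hrq|[->|[->|[->|hrq]]]] : r < q \/ r = q \/ r = q.+1 \/ r = q.+2 \/ q.+2 < r by lia.
- by rewrite window_row_above // -[nseq _ _]cats0 sorted_nseq_cat.
- by rewrite window_row_q sorted_nseq_cat //= h1 h12.
- by rewrite window_row_q1 sorted_nseq_cat //= andbT.
- by rewrite window_row_q2 sorted_nseq_cat //= h4 h45.
- by rewrite window_row_below // -[nseq _ _]cats0 sorted_nseq_cat.
Qed.

Lemma window_row_entries n r : size lam <= n -> r < size lam ->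
  all (fun x => (1 <= x) && (x <= n.+1)) (row r).
Proof.
move=> hn hr.
have [hrq|[->|[->|[->|hrq]]]] : r < q \/ r = q \/ r = q.+1 \/ r = q.+2 \/ q.+2 < r by lia.
- by rewrite window_row_above //; bound_entries.
- by rewrite window_row_q; bound_entries.
- by rewrite window_row_q1; bound_entries.
- by rewrite window_row_q2; bound_entries.
- by rewrite window_row_below //; bound_entries.
Qed.

Lemma col_strict_window_row r : r.+1 < size lam -> col_strict (row r) (row r.+1).
Proof.
move=> hr; have le_rows : size (row r.+1) <= size (row r).
  by rewrite !size_window_row; move/(sortedP 0): lam_sorted => /(_ r hr).
have [hrq|[hrq|[->|[->|[hrq|hrq]]]]] :
    r.+1 < q \/ r.+1 = q \/ r = q \/ r = q.+1 \/ r = q.+2 \/ q.+2 < r by lia.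
- apply: (col_strict_sep (m := r.+1)) le_rows _ _.
  + by rewrite window_row_above; [bound_entries | lia].
  + by rewrite window_row_above //; bound_entries.
- apply: (col_strict_sep (m := q)) le_rows _ _.
  + by rewrite window_row_above; [bound_entries | lia].
  + by rewrite hrq window_row_q; bound_entries.
- by rewrite window_row_q window_row_q1; apply: col_strict_window_q.
- by rewrite window_row_q1 window_row_q2; apply: col_strict_window_q1; lia.
- subst r; apply: (col_strict_sep (m := q.+4)) le_rows _ _.
  + by rewrite window_row_q2; bound_entries.
  + by rewrite window_row_below //; bound_entries.
- apply: (col_strict_sep (m := r.+2)) le_rows _ _.
  + by rewrite window_row_below //; bound_entries.
  + by rewrite window_row_below; [bound_entries | lia].
Qed.

Lemma is_ssyt_window n : size lam <= n -> is_ssyt n lam (window e1 e2 e3 e4 e5).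
Proof.
move=> hn; apply: is_ssyt_mkseq => r.
- by rewrite size_window_row.
- by rewrite sorted_window_row.
- exact: window_row_entries.
- exact: col_strict_window_row.
Qed.

End Cells.

Lemma window_mid_set_e4 e1 e2 e3 e4 e5 v :
  set_nth 0 (window_mid e1 e2 e3 e4 e5) (c - 2) v = window_mid e1 e2 e3 v e5.
Proof. by rewrite /window_mid (@set_nth_nseq_cat 0) ?addn0. Qed.

Lemma window_mid_set_e3 e1 e2 e3 e4 e5 v :
  set_nth 0 (window_mid e1 e2 e3 e4 e5) (c + b - 1) v = window_mid e1 e2 v e4 e5.
Proof.
rewrite /window_mid (@set_nth_nseq_cat ((b - 1).+2)) /=; last lia.
by rewrite (@set_nth_nseq_cat 0) ?addn0.
Qed.

Lemma window_mid_set_e1 e1 e2 e3 e4 e5 v :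
  set_nth 0 (window_mid e1 e2 e3 e4 e5) (c + b + a - 2) v = window_mid v e2 e3 e4 e5.
Proof.
rewrite /window_mid (@set_nth_nseq_cat ((b - 1 + (a - 2).+1).+2)) /=; last lia.
rewrite (@set_nth_nseq_cat ((a - 2).+1)) //=.
by rewrite (@set_nth_nseq_cat 0) ?addn0.
Qed.

Lemma window_mid_set_e2 e1 e2 e3 e4 e5 v :
  set_nth 0 (window_mid e1 e2 e3 e4 e5) (c + b + a - 1) v = window_mid e1 v e3 e4 e5.
Proof.
rewrite /window_mid (@set_nth_nseq_cat ((b - 1 + (a - 2).+2).+2)) /=; last lia.
rewrite (@set_nth_nseq_cat ((a - 2).+2)) //=.
by rewrite (@set_nth_nseq_cat 1) ?addn1.
Qed.

Lemma nth_reading_word_window e1 e2 e3 e4 e5 :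
  nth 0 (reading_word (window e1 e2 e3 e4 e5)) (size window_below + (c - 2)) = e4.
Proof.
rewrite reading_word_window nth_cat ltnNge leq_addr /= addKn -catA.
by rewrite nth_nseq_cat ltnn subnn.
Qed.

Ltac eval_unmatched :=
  rewrite /window_mid; repeat (rewrite /= ?eqxx;
    first [ rewrite unmatched_nseq_open | rewrite unmatched_nseq_close
          | rewrite unmatched_nseq_neutral; [|lia|lia]
          | case: ifP => ?; [exfalso; lia|] | case: ifP => ?; [|exfalso; lia] ]);
  rewrite -!cat_rcons cats0; congr rcons; lia.

Ltac crystal_step j set_lemma :=
  apply: (crystalF_window (j := j)); [lia | eval_unmatched | exact: set_lemma].

Local Notation X := (window q.+1 q.+3 q.+2 q.+3 q.+4).
Local Notation Y := (window q.+2 q.+2 q.+3 q.+3 q.+4).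
Local Notation M := (window q.+2 q.+3 q.+3 q.+3 q.+4).
Local Notation Z := (window q.+2 q.+3 q.+3 q.+4 q.+4).
Local Notation XM := (window q.+1 q.+3 q.+3 q.+3 q.+4).
Local Notation XZ1 := (window q.+1 q.+3 q.+2 q.+4 q.+4).
Local Notation XZ2 := (window q.+1 q.+3 q.+3 q.+4 q.+4).
Local Notation YZ := (window q.+2 q.+2 q.+3 q.+4 q.+4).
Local Notation M' := (window q.+2 q.+4 q.+3 q.+3 q.+4).

Lemma crystalF_X_XM : crystalF q.+2 X = Some XM.
Proof. crystal_step (c + b - 1) window_mid_set_e3. Qed.

Lemma crystalF_XM_M : crystalF q.+1 XM = Some M.
Proof. crystal_step (c + b + a - 2) window_mid_set_e1. Qed.

Lemma crystalF_Y_M : crystalF q.+2 Y = Some M.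
Proof. crystal_step (c + b + a - 1) window_mid_set_e2. Qed.

Lemma crystalF_X_XZ1 : crystalF q.+3 X = Some XZ1.
Proof. crystal_step (c - 2) window_mid_set_e4. Qed.

Lemma crystalF_XZ1_XZ2 : crystalF q.+2 XZ1 = Some XZ2.
Proof. crystal_step (c + b - 1) window_mid_set_e3. Qed.

Lemma crystalF_XZ2_Z : crystalF q.+1 XZ2 = Some Z.
Proof. crystal_step (c + b + a - 2) window_mid_set_e1. Qed.

Lemma crystalF_Y_YZ : crystalF q.+3 Y = Some YZ.
Proof. crystal_step (c - 2) window_mid_set_e4. Qed.

Lemma crystalF_YZ_Z : crystalF q.+2 YZ = Some Z.
Proof. crystal_step (c + b + a - 1) window_mid_set_e2. Qed.

Lemma crystalF_M : crystalF q.+3 M = Some M'.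
Proof. crystal_step (c + b + a - 1) window_mid_set_e2. Qed.

Lemma reading_word_M : reading_word M = maxw (reading_word X) (reading_word Y).
Proof.
rewrite !reading_word_window /window_mid !(maxw_cat, maxw_cons, maxw_id) //=;
  last by rewrite !size_cat /= !size_cat /= !size_cat.
by rewrite !maxnn !(maxn_idPr (leqnSn _)) (maxn_idPl (leqnSn _)).
Qed.

Variable n : nat.
Hypothesis hn : size lam <= n.

Lemma Ble_X_M : Ble n X M.
Proof.
by apply: Ble_trans (Ble_crystalF _ crystalF_X_XM) (Ble_crystalF _ crystalF_XM_M); lia.
Qed.

Lemma Ble_Y_M : Ble n Y M.
Proof. by apply: Ble_crystalF crystalF_Y_M; lia. Qed.

Lemma Ble_X_Z : Ble n X Z.
Proof.
apply: Ble_trans (Ble_crystalF _ crystalF_X_XZ1) _; first lia.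
by apply: Ble_trans (Ble_crystalF _ crystalF_XZ1_XZ2) (Ble_crystalF _ crystalF_XZ2_Z); lia.
Qed.

Lemma Ble_Y_Z : Ble n Y Z.
Proof.
by apply: Ble_trans (Ble_crystalF _ crystalF_Y_YZ) (Ble_crystalF _ crystalF_YZ_Z); lia.
Qed.

Lemma sumn_reading_word_Z : sumn (reading_word Z) = (sumn (reading_word M)).+1.
Proof.
have [_ ->] := crystalF_reading_word crystalF_YZ_Z.
have [_ ->] := crystalF_reading_word crystalF_Y_YZ.
by have [_ ->] := crystalF_reading_word crystalF_Y_M.
Qed.

Lemma not_fstep_M_Z : ~ fstep n M Z.
Proof.
set k := size window_below + (c - 2).
case=> i [_ FMZ]; have := crystalF_changed (k := k) FMZ.
rewrite !nth_reading_word_window => /(_ (negbT (ltn_eqF (ltnSn _)))) iq; subst i.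
move: FMZ; rewrite crystalF_M => -[/(congr1 (fun T => nth 0 (reading_word T) k))].
by rewrite !nth_reading_word_window => /eqP; rewrite ltn_eqF.
Qed.

Lemma window_not_lattice : ~ B_is_lattice n lam.
Proof.
move=> lattice.
have ssyt_X : is_ssyt n lam X by apply: is_ssyt_window => //; lia.
have ssyt_Y : is_ssyt n lam Y by apply: is_ssyt_window => //; lia.
have ssyt_M : is_ssyt n lam M by apply: is_ssyt_window => //; lia.
have ssyt_Z : is_ssyt n lam Z by apply: is_ssyt_window => //; lia.
have [[j [_ Xj Yj j_least]] _] := lattice X Y ssyt_X ssyt_Y.
have jM : j = M.
  exact: Ble_maxw_eq Xj Yj (j_least M ssyt_M Ble_X_M Ble_Y_M) reading_word_M.
apply: not_fstep_M_Z; apply: Ble_cover sumn_reading_word_Z.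
by rewrite -jM; apply: j_least ssyt_Z Ble_X_Z Ble_Y_Z.
Qed.

End Window.

Theorem lemma5p4 (lam : seq nat) (n : nat) :
  sorted geq lam -> all (fun x => 0 < x) lam -> size lam <= n ->
  (exists p, [/\ 1 <= p, p <= size lam - 2,
                 nth 0 lam p < nth 0 lam p.-1,
                 nth 0 lam p.+1 <= nth 0 lam p &
                 2 <= nth 0 lam p.+1]) ->
  ~ B_is_lattice n lam.
Proof.
move=> lam_sorted _ hn [[|q] [_ hq hab hbc hc]] //.
by apply: (window_not_lattice (q := q)) => //; lia.
Qed.
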